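(* Let $\overline{C}(\alpha,N)$ and $\overline{C}(\alpha)$ be as defined in the context. Then: (1) For real $0\le\alpha\le2$, $\overline{C}(\alpha,1)=0$ and $\overline{C}(\alpha,2)=1$. (2) For real $0\le\alpha\le2$ and positive integers $N$, $\overline{C}(\alpha,N)\le\overline{C}(\alpha,N+1)$. (3) For real $0\le\alpha\le2$ and positive integers $N$, $0\le\overline{C}(\alpha,N)\le N-1$. (4) For real $0\le\alpha\le2$, $\overline{C}(\alpha)=\lim_{N\to\infty}\overline{C}(\alpha,N)$.
   Context: For a strictly increasing sequence $(\lambda_k)_{k=-\infty}^{\infty}$ of real numbers, put $\delta_k:=\min\{\lambda_k-\lambda_{k-1},\lambda_{k+1}-\lambda_k\}$. For $0\le\alpha\le2$ and a positive integer $N$, let $\overline{C}(\alpha,N)$ be the minimum of all constants $C(\alpha,N)$ such that $$\sum_{m=1}^N\sum_{\substack{n=1\\ n\ne m}}^N\frac{\delta_m^{2-\alpha}\delta_n^{\alpha}t_mt_n}{(\lambda_m-\lambda_n)^2}\le C(\alpha,N)\sum_{n=1}^N t_n^2$$ holds for every strictly increasing real sequence $(\lambda_k)_{k\in\mathbb Z}$ and all nonnegative reals $t_1,\dots,t_N$. Let $\overline{C}(\alpha)$ be the minimum of all constants $C(\alpha)$ for which the same inequality (with $C(\alpha)$ in place of $C(\alpha,N)$) holds for every positive integer $N$, every such sequence and all nonnegative $t_1,\dots,t_N$; set $\overline{C}(\alpha)=\infty$ if no such real constant exists. *)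

From HB Require Import structures.
From mathcomp Require Import all_boot all_order all_algebra.
From mathcomp Require Import all_classical all_reals all_analysis.
Set Implicit Arguments. Unset Strict Implicit. Unset Printing Implicit Defensive.
Import Order.TTheory GRing.Theory Num.Theory.
Local Open Scope ring_scope.
Local Open Scope classical_set_scope.

Section Defs.
Variable R : realType.

Definition strictly_increasing (lam : int -> R) : Prop :=
  forall k : int, lam k < lam (k + 1).

Definition delta (lam : int -> R) (k : int) : R :=
  Num.min (lam k - lam (k - 1)) (lam (k + 1) - lam k).

Definition lhs (alpha : R) (N : nat) (lam : int -> R) (t : nat -> R) : R :=
  \sum_(1 <= m < N.+1) \sum_(1 <= n < N.+1 | n != m)
     (delta lam m%:Z `^ (2 - alpha) * delta lam n%:Z `^ alpha * t m * t n)
       / (lam m%:Z - lam n%:Z) ^+ 2.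

Definition sumsq (N : nat) (t : nat -> R) : R :=
  \sum_(1 <= n < N.+1) t n ^+ 2.

Definition admissible (alpha : R) (N : nat) (C : R) : Prop :=
  forall (lam : int -> R) (t : nat -> R),
    strictly_increasing lam ->
    (forall n, (1 <= n <= N)%N -> 0 <= t n) ->
    lhs alpha N lam t <= C * sumsq N t.

Definition admissible_all (alpha : R) (C : R) : Prop :=
  forall N : nat, (0 < N)%N -> admissible alpha N C.

Definition Cbar (alpha : R) (N : nat) : \bar R :=
  ereal_inf (EFin @` [set C | admissible alpha N C]).

(* \overline{C}(alpha): least admissible uniform constant; +oo if none exists *)
Definition Cbar_inf (alpha : R) : \bar R :=
  ereal_inf (EFin @` [set C | admissible_all alpha C]).

End Defs.

From HB Require Import structures.
From mathcomp Require Import all_boot all_order all_algebra.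
From mathcomp Require Import all_classical all_reals all_analysis.
From mathcomp Require Import ring lra.
Import Order.TTheory GRing.Theory Num.Theory.
Local Open Scope ring_scope.
Local Open Scope classical_set_scope.

(* Since delta_m and delta_n are both at most |lambda_m - lambda_n| and the
   exponents 2 - alpha and alpha add up to 2, every weight
   delta_m^(2-alpha) delta_n^alpha / (lambda_m - lambda_n)^2 is at most 1, so
   the left-hand side is at most sum_(m <> n) t_m t_n <= (N - 1) sum_n t_n^2.
   The sequence lambda_k = k has all delta_k = 1, which gives the lower bounds
   0 and, for N = 2 and t = (1, 1), the value 1.  Padding t with a zero shows
   that C(alpha, N) is nondecreasing in N.  The admissible constants form a
   closed up-set, so the uniform admissible constants are exactly the upper
   bounds of all C(alpha, N), and C(alpha) is the supremum, hence the limit,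
   of this nondecreasing sequence. *)

Set Implicit Arguments.
Unset Strict Implicit.
Unset Printing Implicit Defensive.

Section InverseSquareInequality.
Variable R : realType.
Implicit Types (alpha C : R) (lam : int -> R) (t : nat -> R).

Lemma sumsq_ge0 N t : 0 <= sumsq N t.
Proof. by apply: sumr_ge0 => n _; exact: sqr_ge0. Qed.

Lemma admissible_le alpha N C C' :
  admissible alpha N C -> C <= C' -> admissible alpha N C'.
Proof.
move=> hC leCC' lam t lam_incr t_ge0; apply: le_trans (hC lam t lam_incr t_ge0) _.
by rewrite ler_wpM2r ?sumsq_ge0.
Qed.

Lemma admissible_closed alpha N C :
  (forall e, 0 < e -> admissible alpha N (C + e)) -> admissible alpha N C.
Proof.
move=> hC lam t lam_incr t_ge0.
have [S0|S_neq0] := eqVneq (sumsq N t) 0.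
  by have := hC 1 ltr01 lam t lam_incr t_ge0; rewrite S0 !mulr0.
have S_gt0 : 0 < sumsq N t by rewrite lt_def S_neq0 sumsq_ge0.
apply/ler_addgt0Pr => e e_gt0.
have := hC (e / sumsq N t) (divr_gt0 e_gt0 S_gt0) lam t lam_incr t_ge0.
by rewrite mulrDl divfK.
Qed.

Lemma strictly_increasing_le lam :
  strictly_increasing lam -> {homo lam : i j / i <= j}.
Proof.
move=> lam_incr i j; rewrite -subr_ge0 -[j](subrK i) addrK.
case: (j - i) => [n _|//]; elim: n => [|n IHn]; first by rewrite add0r.
apply: le_trans IHn (ltW _).
by rewrite -addn1 PoszD addrAC; exact: lam_incr.
Qed.

Lemma delta_gt0 lam k : strictly_increasing lam -> 0 < delta lam k.
Proof.
move=> lam_incr; rewrite /delta lt_min !subr_gt0 lam_incr andbT.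
by have := lam_incr (k - 1); rewrite subrK.
Qed.

Lemma delta_le_dist lam m n : strictly_increasing lam -> m != n ->
  delta lam m <= `|lam m - lam n|.
Proof.
move=> lam_incr; have lam_le := strictly_increasing_le lam_incr.
rewrite neq_lt /delta ge_min => /orP[] lt_mn.
- rewrite distrC ger0_norm ?subr_ge0 ?lam_le ?(ltW lt_mn) //.
  by rewrite lerD2r lam_le ?lezD1 ?orbT.
- rewrite ger0_norm ?subr_ge0 ?lam_le ?(ltW lt_mn) //.
  by rewrite lerD2l lerN2 lam_le // lerBrDr lezD1.
Qed.

Lemma delta_weight_le_sqr alpha lam m n :
  0 <= alpha <= 2 -> strictly_increasing lam -> m != n ->
  0 <= delta lam m `^ (2 - alpha) * delta lam n `^ alpha <= (lam m - lam n) ^+ 2.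
Proof.
move=> /andP[alpha_ge0 alpha_le2] lam_incr neq_mn.
rewrite mulr_ge0 ?powR_ge0 //=.
have -> : (lam m - lam n) ^+ 2 =
    `|lam m - lam n| `^ (2 - alpha) * `|lam m - lam n| `^ alpha.
  rewrite -powRD ?subrK ?pnatr_eq0 // -[2]/(2%:R) powR_mulrn //.
  by rewrite real_normK ?num_real.
have delta_ge0 k : 0 <= delta lam k by exact/ltW/delta_gt0.
rewrite ler_pM ?powR_ge0 // ge0_ler_powR ?nnegrE ?subr_ge0 //.
- exact: delta_le_dist.
- by rewrite distrC delta_le_dist // eq_sym.
Qed.

Lemma sum_neq_nat (F : nat -> R) N m : (1 <= m < N.+1)%N ->
  \sum_(1 <= n < N.+1 | n != m) F n = \sum_(1 <= n < N.+1) F n - F m.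
Proof.
move=> m_in; rewrite [in RHS](bigD1_seq m) ?mem_index_iota ?iota_uniq //.
by rewrite addrAC subrr add0r.
Qed.

Lemma sum_offdiag_add (F : nat -> R) N :
  \sum_(1 <= m < N.+1) \sum_(1 <= n < N.+1 | n != m) (F m + F n)
    = ((N%:R - 1) * \sum_(1 <= n < N.+1) F n) *+ 2.
Proof.
under eq_big_nat => m m_in do
  rewrite sum_neq_nat // big_split /= sumr_const_nat subn1 /=.
by rewrite !big_split /= sumrN big_split /= sumrMnl sumr_const_nat subn1 /=; ring.
Qed.

Lemma sum_offdiag_mul_le N t :
  \sum_(1 <= m < N.+1) \sum_(1 <= n < N.+1 | n != m) t m * t n
    <= (N%:R - 1) * sumsq N t.
Proof.
have amgm m n : t m * t n <= (t m ^+ 2 + t n ^+ 2) / 2.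
  rewrite ler_pdivlMr // -subr_ge0.
  have -> : t m ^+ 2 + t n ^+ 2 - t m * t n * 2 = (t m - t n) ^+ 2 by ring.
  exact: sqr_ge0.
apply: le_trans (_ : _ <= \sum_(1 <= m < N.+1) \sum_(1 <= n < N.+1 | n != m)
    (t m ^+ 2 + t n ^+ 2) / 2) _.
  by apply: ler_sum => m _; apply: ler_sum => n _.
under eq_bigr => m _ do rewrite -mulr_suml.
by rewrite -mulr_suml sum_offdiag_add mulr2n mulrDl -splitr.
Qed.

Lemma admissible_Nsub1 alpha N : 0 <= alpha <= 2 -> admissible alpha N (N%:R - 1).
Proof.
move=> alpha_bd lam t lam_incr t_ge0.
apply: le_trans (sum_offdiag_mul_le N t).
apply: ler_sum_nat => m m_in.
rewrite big_nat_cond [leRHS]big_nat_cond; apply: ler_sum => n /andP[n_in neq_nm].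
have neq_mn : m%:Z != n%:Z by rewrite eq_sym.
have /andP[w_ge0 w_le] := delta_weight_le_sqr alpha_bd lam_incr neq_mn.
have dist_gt0 : 0 < `|lam m - lam n|.
  exact: lt_le_trans (delta_gt0 _ lam_incr) (delta_le_dist lam_incr neq_mn).
have sqr_gt0 : 0 < (lam m - lam n) ^+ 2 by rewrite -real_normK ?num_real ?exprn_gt0.
have tmn_ge0 : 0 <= t m * t n by rewrite mulr_ge0 ?t_ge0.
by rewrite ler_pdivrMr // -mulrA mulrC ler_wpM2l.
Qed.

Lemma strictly_increasing_intr : strictly_increasing (intr : int -> R).
Proof. by move=> k; rewrite intrD ltrDl ltr01. Qed.

Lemma delta_intr k : delta intr k = 1 :> R.
Proof. by rewrite /delta -!intrB subKr addrAC subrr add0r minxx. Qed.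

Lemma admissible_ge0 alpha N C : (0 < N)%N -> admissible alpha N C -> 0 <= C.
Proof.
move=> N_gt0 hC; pose t (n : nat) : R := if n == 1%N then 1 else 0.
have t_ge0 n : 0 <= t n by rewrite /t; case: ifP.
have := hC intr t strictly_increasing_intr (fun n _ => t_ge0 n).
have -> : lhs alpha N intr t = 0.
  apply: big1 => m _; apply: big1 => n neq_nm; rewrite /t.
  case: eqP => [m1|_]; last by rewrite !(mulr0, mul0r).
  by rewrite -m1 (negPf neq_nm) !(mulr0, mul0r).
have -> : sumsq N t = 1.
  rewrite /sumsq big_ltn ?ltnS // /t eqxx expr1n big1_seq ?addr0 // => n.
  by rewrite mem_index_iota => /andP[_ /andP[/gtn_eqF-> _]]; rewrite expr0n.
by rewrite mulr1.
Qed.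

Lemma admissible2_ge1 alpha C : admissible alpha 2 C -> 1 <= C.
Proof.
move=> hC; have := hC intr (fun=> 1) strictly_increasing_intr (fun _ _ => ler01).
have -> : lhs alpha 2 intr (fun=> 1) = 2.
  rewrite /lhs big_ltn // big_ltn // big_geq //.
  rewrite big_mkcond big_ltn // big_ltn // big_geq //.
  rewrite big_mkcond big_ltn // big_ltn // big_geq //=.
  rewrite !delta_intr powR1 !mul1r !addr0 !add0r.
  rewrite (_ : 1%Z%:~R = 1 :> R) // (_ : 2%Z%:~R = 2 :> R) //.
  have two_sub1 : 2 - 1 = 1 :> R by lra.
  by rewrite -opprB sqrrN two_sub1 expr1n invr1.
have -> : sumsq 2 (fun=> 1 : R) = 2.
  by rewrite /sumsq big_ltn // big_ltn // big_geq // !expr1n addr0.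
lra.
Qed.

Lemma admissible0 alpha C : admissible alpha 0 C.
Proof. by move=> lam t _ _; rewrite /lhs /sumsq !big_geq // mulr0. Qed.

Lemma admissible_succ alpha N C : admissible alpha N.+1 C -> admissible alpha N C.
Proof.
move=> hC lam t lam_incr t_ge0.
pose t' (n : nat) := if n == N.+1 then 0 else t n.
have t'N : t' N.+1 = 0 by rewrite /t' eqxx.
have t'E n : (n < N.+1)%N -> t' n = t n by rewrite /t' => /ltn_eqF->.
have t'_ge0 n : (1 <= n <= N.+1)%N -> 0 <= t' n.
  move=> /andP[n_ge1]; rewrite leq_eqVlt => /orP[/eqP->|n_le]; first by rewrite t'N.
  by rewrite t'E // t_ge0 // n_ge1 -ltnS.
have := hC lam t' lam_incr t'_ge0.
have -> : sumsq N.+1 t' = sumsq N t.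
  rewrite /sumsq big_nat_recr //= t'N expr0n addr0.
  by apply: eq_big_nat => n /andP[_ n_le]; rewrite t'E.
suff -> : lhs alpha N.+1 lam t' = lhs alpha N lam t by [].
rewrite /lhs big_nat_recr //= [X in _ + X]big1 ?addr0; last first.
  by move=> n _; rewrite t'N !(mulr0, mul0r).
apply: eq_big_nat => m /andP[_ m_le].
rewrite big_mkcond big_nat_recr //= t'N mulr0 mul0r gtn_eqF // addr0.
rewrite [RHS]big_mkcond; apply: eq_big_nat => n /andP[_ n_le].
by rewrite !t'E.
Qed.

Local Open Scope ereal_scope.

Lemma Cbar_le alpha N C : admissible alpha N C -> Cbar alpha N <= C%:E.
Proof. by move=> hC; apply: ereal_inf_lbound; exists C. Qed.

Lemma Cbar_le_Nsub1 alpha N : (0 <= alpha <= 2)%R -> Cbar alpha N <= (N%:R - 1)%:E.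
Proof. by move=> alpha_bd; apply/Cbar_le/admissible_Nsub1. Qed.

Lemma Cbar_ge0 alpha N : (0 < N)%N -> 0 <= Cbar alpha N.
Proof.
move=> N_gt0; apply: le_ereal_inf_tmp => _ [C hC <-].
by rewrite lee_fin (admissible_ge0 N_gt0 hC).
Qed.

Lemma Cbar2_ge1 alpha : 1 <= Cbar alpha 2.
Proof.
by apply: le_ereal_inf_tmp => _ [C hC <-]; rewrite lee_fin (admissible2_ge1 hC).
Qed.

Lemma admissible_Cbar_le alpha N C : Cbar alpha N <= C%:E -> admissible alpha N C.
Proof.
move=> le_C; apply: admissible_closed => e e_gt0.
have : Cbar alpha N < (C + e)%:E by rewrite (le_lt_trans le_C) // lte_fin ltrDl.
move=> /ereal_inf_lt [_ [D hD <-]]; rewrite lte_fin => /ltW.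
exact: admissible_le.
Qed.

Lemma Cbar_nondecreasing alpha : {homo Cbar alpha : N M / (N <= M)%N >-> N <= M}.
Proof.
apply/nondecreasing_seqP => N.
by apply: ereal_inf_le_tmp => _ [C hC <-]; exists C => //; exact: admissible_succ.
Qed.

Lemma Cbar_inf_sup alpha : Cbar_inf alpha = ereal_sup (range (Cbar alpha)).
Proof.
apply/eqP; rewrite eq_le; apply/andP; split; last first.
  apply: ge_ereal_sup => _ [N _ <-]; apply: ereal_inf_le_tmp => _ [C hC <-].
  by exists C => //; case: N => [|N]; [exact: admissible0 | exact: hC].
have Cbar_le_sup N : Cbar alpha N <= ereal_sup (range (Cbar alpha)).
  by apply: ereal_sup_ubound; exists N.
have := le_trans (Cbar_ge0 alpha (ltn0Sn 0)) (Cbar_le_sup 1%N).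
case: (ereal_sup _) Cbar_le_sup => [C Cbar_le_C _|_ _|_];
  [|exact: leey|by rewrite leeNy_eq].
apply: ereal_inf_lbound; exists C => // N _.
exact: admissible_Cbar_le.
Qed.

Lemma Cbar_cvg alpha : Cbar alpha @ \oo --> Cbar_inf alpha.
Proof. by rewrite Cbar_inf_sup; exact/ereal_nondecreasing_cvgn/Cbar_nondecreasing. Qed.

End InverseSquareInequality.

Theorem proposition2 (R : realType) :
  (forall alpha : R, 0 <= alpha <= 2 ->
     Cbar alpha 1 = 0%:E /\ Cbar alpha 2 = 1%:E) /\
  (forall (alpha : R) (N : nat), 0 <= alpha <= 2 -> (0 < N)%N ->
     (Cbar alpha N <= Cbar alpha N.+1)%E) /\
  (forall (alpha : R) (N : nat), 0 <= alpha <= 2 -> (0 < N)%N ->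
     (0%:E <= Cbar alpha N)%E /\ (Cbar alpha N <= (N%:R - 1)%:E)%E) /\
  (forall alpha : R, 0 <= alpha <= 2 ->
     Cbar alpha @ \oo --> Cbar_inf alpha).
Proof.
split; [move=> alpha alpha_bd; split | split; [|split]].
- apply/le_anti; rewrite Cbar_ge0 // andbT.
  by have := Cbar_le_Nsub1 1 alpha_bd; rewrite subrr.
- apply/le_anti; rewrite Cbar2_ge1 andbT.
  by have := Cbar_le_Nsub1 2 alpha_bd; rewrite -[2%:R]/(1 + 1) addrK.
- by move=> alpha N _ _; exact: Cbar_nondecreasing.
- by move=> alpha N alpha_bd N_gt0; split; [exact: Cbar_ge0 | exact: Cbar_le_Nsub1].
- by move=> alpha _; exact: Cbar_cvg.
Qed.
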